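(* Let $\mathfrak{g}$ be a finite-dimensional real Lie algebra with linear bivector $\bar\alpha^{ij}=\tfrac12c_k^{ij}X^k$. Every graph $\Gamma\in G_n$ whose operator $B_{\Gamma,\bar\alpha}$ is not identically zero is either a loop graph or a Sym-admissible graph. Thus the bi-differential operators occurring in Kontsevich's quantization of $\mathfrak{g}^*$ are of two types: those corresponding to loop graphs and those corresponding to Sym-admissible graphs.
   Context: Basis $X^1,\ldots,X^d$ of $\mathfrak{g}$ with $[X^i,X^j]=c_k^{ij}X^k$; the $X^i$ are linear coordinates on $\mathfrak{g}^*$, $\partial_i=\partial/\partial X^i$. $G_n$: oriented labeled graphs with vertex set $\{1,\ldots,n\}\cup\{X,Y\}$ and $2n$ edges, exactly two ordered edges $e_k^1,e_k^2$ starting at each aerial vertex $k$ and ending at vertices other than $k$, none starting at $X,Y$. $B_{\Gamma,\bar\alpha}(f,g)=\sum_{I:E_\Gamma\to\{1,\ldots,d\}}\Big[\prod_{k=1}^n\Big(\prod_{e=( *,k)}\partial_{I(e)}\Big)\bar\alpha^{I(e_k^1)I(e_k^2)}\Big]\Big(\prod_{e=( *,X)}\partial_{I(e)}\Big)f\,\Big(\prod_{e=( *,Y)}\partial_{I(e)}\Big)g$. Kontsevich's quantization of $\mathfrak{g}^*$ is $f\star g=\sum_n\epsilon^n\sum_{\Gamma\in G_n}w_K(\Gamma)B_{\Gamma,\bar\alpha}(f,g)$ for certain numerical weights $w_K(\Gamma)$. A loop graph is one containing a directed cycle. A graph is Sym-admissible if it is the graph with no edges, or if, after redirecting each edge ending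 at $X$ (resp. $Y$) to its own new leaf labeled $X$ (resp. $Y$), it becomes a disjoint union of rooted binary trees whose internal nodes are the aerial vertices (edges directed from a node to its two children) and whose leaves are the new $X/Y$ leaves. *)

From HB Require Import structures.
From mathcomp Require Import all_boot all_order all_algebra.
From mathcomp Require Import reals.
From mathcomp Require Import mpoly.
Set Implicit Arguments. Unset Strict Implicit. Unset Printing Implicit Defensive.
Import Order.TTheory GRing.Theory Num.Theory.
Local Open Scope ring_scope.

(** * Lie algebra structure constants
   A Lie algebra g with basis X^0..X^(d-1); [c i j k] = c_k^{ij}, i.e.
   [X^i, X^j] = \sum_k c_k^{ij} X^k. *)
Definition is_lie_structure (R : realType) (d : nat)
    (c : 'I_d -> 'I_d -> 'I_d -> R) : Prop :=
  (forall i j k, c i j k = - c j i k) /\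
  (forall i j k m,
     \sum_(l < d) (c i j l * c l k m + c j k l * c l i m + c k i l * c l j m)
       = 0).

(** The linear bivector  alpha^{ij} = 1/2 c_k^{ij} X^k  on g^*, where the
    X^k are the linear coordinates on g^* (polynomial ring in d variables). *)
Definition alpha_bar (R : realType) (d : nat) (c : 'I_d -> 'I_d -> 'I_d -> R)
    (i j : 'I_d) : {mpoly R[d]} :=
  2^-1 *: \sum_(k < d) c i j k *: 'X_k.

(** * Kontsevich graphs G_n
   Vertices: aerial vertices [inl k] (k : 'I_n), and the two ground vertices
   X := [inr false], Y := [inr true].  Edges: e_k^1 = (k, false) and
   e_k^2 = (k, true), starting at aerial vertex k; [kg_tgt e] is the end
   vertex of e, which must differ from the starting vertex. *)
Definition kvertex (n : nat) := ('I_n + bool)%type.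
Definition vX {n : nat} : kvertex n := inr false.
Definition vY {n : nat} : kvertex n := inr true.

Record kgraph (n : nat) := KGraph {
  kg_tgt : {ffun 'I_n * bool -> kvertex n};
  kg_tgt_ok : forall (k : 'I_n) (b : bool), kg_tgt (k, b) != inl k
}.

Definition edges_into (n : nat) (G : kgraph n) (v : kvertex n)
  : seq ('I_n * bool) :=
  [seq e <- enum {: 'I_n * bool} | kg_tgt G e == v].

Definition derivs (R : realType) (d : nat) (s : seq 'I_d) (p : {mpoly R[d]})
  : {mpoly R[d]} :=
  foldr (fun i q => mderiv i q) p s.

Definition B_op (R : realType) (d n : nat) (c : 'I_d -> 'I_d -> 'I_d -> R)
    (G : kgraph n) (f g : {mpoly R[d]}) : {mpoly R[d]} :=
  \sum_(I : {ffun 'I_n * bool -> 'I_d})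
    ((\prod_(k < n)
        derivs [seq I e | e <- edges_into G (inl k)]
               (alpha_bar c (I (k, false)) (I (k, true))))
     * derivs [seq I e | e <- edges_into G vX] f
     * derivs [seq I e | e <- edges_into G vY] g).

(** * Loop graphs: Gamma contains a directed cycle.
   Only aerial vertices have outgoing edges, so a directed cycle consists of
   aerial vertices; [aerial_edge G k j] iff there is an edge from k to j. *)
Definition aerial_edge (n : nat) (G : kgraph n) : rel 'I_n :=
  fun k j => (kg_tgt G (k, false) == inl j) || (kg_tgt G (k, true) == inl j).

Definition loop_graph (n : nat) (G : kgraph n) : Prop :=
  exists k j : 'I_n, aerial_edge G k j && connect (aerial_edge G) j k.

(** * Sym-admissible graphs
   Rooted binary trees whose internal nodes are labelled by aerial vertices
   and whose leaves are labelled X ([false]) or Y ([true]). *)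
Inductive btree (n : nat) :=
| BLeaf of bool
| BNode of 'I_n & btree n & btree n.

Definition btree_root (n : nat) (t : btree n) : kvertex n :=
  match t with
  | BLeaf b => inr b
  | BNode k _ _ => inl k
  end.

Fixpoint btree_nodes (n : nat) (t : btree n) : seq 'I_n :=
  match t with
  | BLeaf _ => [::]
  | BNode k l r => k :: (btree_nodes l ++ btree_nodes r)
  end.

Definition is_bnode (n : nat) (t : btree n) : bool :=
  if t is BNode _ _ _ then true else false.

Fixpoint btree_fits (n : nat) (G : kgraph n) (t : btree n) : bool :=
  match t with
  | BLeaf _ => true
  | BNode k l r =>
      [&& kg_tgt G (k, false) == btree_root l,
          kg_tgt G (k, true) == btree_root r,
          btree_fits G l & btree_fits G r]
  end.

(** Gamma is Sym-admissible: it is the graph with no edges (n = 0), or after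
    splitting every edge ending at X (resp. Y) to its own new leaf, it is a
    disjoint union (forest F) of rooted binary trees whose internal nodes are
    exactly the aerial vertices (each occurring exactly once) and whose leaves
    are the new X/Y leaves. *)
Definition sym_admissible (n : nat) (G : kgraph n) : Prop :=
  n = 0%N \/
  exists F : seq (btree n),
    [/\ all (@is_bnode n) F,
        perm_eq (flatten [seq btree_nodes t | t <- F]) (enum 'I_n)
      & all (btree_fits G) F].

From HB Require Import structures.
From mathcomp Require Import all_boot all_order all_algebra.
From mathcomp Require Import reals.
From mathcomp Require Import mpoly.
From mathcomp Require Import zify.
Set Implicit Arguments. Unset Strict Implicit. Unset Printing Implicit Defensive.
Import GRing.Theory.

(** Idea: the bivector alpha is linear in the coordinates, so an aerial
    vertex hit by two edges carries a second derivative of a linear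
    polynomial, which vanishes; hence B_Gamma <> 0 forces every aerial vertex
    to have in-degree at most one.  A
    graph without directed cycles in which every aerial vertex has at most
    one parent is a forest: every aerial vertex is reached from exactly one
    source, and unfolding the two outgoing edges from each source gives
    binary trees whose leaves are the edges into X and Y and which together
    contain each aerial vertex exactly once. *)

Section UniquePredecessors.
Variables (T : finType) (e : rel T).

Lemma connect_last_step a b :
  connect e a b -> a != b -> exists2 p, connect e a p & e p b.
Proof.
case/connectP=> q; elim/last_ind: q => [|q y _] /=; first by move=> _ ->; rewrite eqxx.
rewrite rcons_path last_rcons => /andP[aq qy] -> _.
by exists (last a q) => //; apply/connectP; exists q.
Qed.

Definition reach_card (k : T) := #|[pred y | connect e k y]|.

Definition is_source (r : T) := [forall k, ~~ e k r].

Lemma connect_source_eq a r : is_source r -> connect e a r -> a = r.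
Proof.
move=> /forallP r_src ar; have [//|a_neq_r] := eqVneq a r.
by have [p _ pr] := connect_last_step ar a_neq_r; move: (r_src p); rewrite pr.
Qed.

Hypothesis pred_uniq : forall p1 p2 x, e p1 x -> e p2 x -> p1 = p2.

Lemma connect_comparable a b x :
  connect e a x -> connect e b x -> connect e a b || connect e b a.
Proof.
case/connectP=> q; elim/last_ind: q x => [|q y IHq] x /=.
  by move=> _ -> ->; rewrite orbT.
rewrite rcons_path last_rcons => /andP[aq qy] -> bx.
have [->|b_neq_y] := eqVneq b y.
  apply/orP; left; apply/connectP; exists (rcons q y).
    by rewrite rcons_path aq qy.
  by rewrite last_rcons.
have [p bp py] := connect_last_step bx b_neq_y.
by rewrite (pred_uniq py qy) in bp; apply: IHq bp.
Qed.

Lemma source_uniq r1 r2 x : is_source r1 -> is_source r2 ->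
  connect e r1 x -> connect e r2 x -> r1 = r2.
Proof.
move=> r1_src r2_src r1x r2x.
case/orP: (connect_comparable r1x r2x) => [|/(connect_source_eq r1_src)] //.
exact: connect_source_eq.
Qed.

Hypothesis acyclic : forall k j, e k j -> ~~ connect e j k.

Lemma reach_card_lt k j : e k j -> reach_card j < reach_card k.
Proof.
move=> kj; apply/proper_card/properP; split.
  by apply/subsetP => y; rewrite !inE; apply/connect_trans/connect1.
by exists k; rewrite !inE ?connect0 ?acyclic.
Qed.

Lemma exists_source x : exists2 r, is_source r & connect e r x.
Proof.
have : x \in [pred y | connect e y x] by rewrite inE connect0.
case/(arg_maxnP reach_card) => r rx r_max; exists r => //.
apply/forallP => k; apply/negP => kr.
have := r_max k (connect_trans (connect1 kr) rx).
by have := reach_card_lt kr; lia.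
Qed.

Lemma connect_siblings_eq k a b : e k a -> e k b -> connect e a b -> a = b.
Proof.
move=> ka kb ab; have [//|a_neq_b] := eqVneq a b.
have [p ap pb] := connect_last_step ab a_neq_b.
by rewrite (pred_uniq pb kb) in ap; move: (acyclic ka); rewrite ap.
Qed.

Lemma siblings_disjoint k a b x : e k a -> e k b -> a != b ->
  ~~ (connect e a x && connect e b x).
Proof.
move=> ka kb a_neq_b; apply/negP => /andP[ax bx].
move/eqP: a_neq_b; apply; case/orP: (connect_comparable ax bx) => [ab|ba].
  exact: connect_siblings_eq ka kb ab.
exact/esym/(connect_siblings_eq kb ka ba).
Qed.

End UniquePredecessors.

Section KontsevichGraphs.
Variables (n : nat) (G : kgraph n).
Local Notation tgt := (kg_tgt G).
Local Notation E := (aerial_edge G).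

Lemma aerial_edgeP k j : reflect (exists b, tgt (k, b) = inl j) (E k j).
Proof.
apply: (iffP orP) => [[/eqP|/eqP]|[[] ->]].
- by exists false.
- by exists true.
- by right.
- by left.
Qed.

Definition aerial_indeg_le1 :=
  forall e1 e2 j, tgt e1 = inl j -> tgt e2 = inl j -> e1 = e2.

Definition target_reaches (v : kvertex n) (x : 'I_n) :=
  if v is inl j then connect E j x else false.

Lemma target_reaches_connect k b x :
  target_reaches (tgt (k, b)) x -> connect E k x.
Proof.
case Ekb: (tgt (k, b)) => [j|] //= jx.
by apply: connect_trans jx; apply/connect1/aerial_edgeP; exists b.
Qed.

Lemma connect_targets k x : connect E k x =
  [|| k == x, target_reaches (tgt (k, false)) x | target_reaches (tgt (k, true)) x].
Proof.
apply/idP/idP; last first.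
  by case/or3P=> [/eqP->|/target_reaches_connect|/target_reaches_connect].
case/connectP=> -[|y q] /=; first by move=> _ ->; rewrite eqxx.
case/andP=> /aerial_edgeP[b Ekb] yq qx.
have : target_reaches (tgt (k, b)) x by rewrite Ekb; apply/connectP; exists q.
by case: b {Ekb} => ->; rewrite ?orbT.
Qed.

Hypothesis indeg : aerial_indeg_le1.
Hypothesis acyclic : forall k j, E k j -> ~~ connect E j k.

Lemma aerial_pred_uniq p1 p2 j : E p1 j -> E p2 j -> p1 = p2.
Proof. by case/aerial_edgeP=> [b1 h1] /aerial_edgeP[b2 h2]; case: (indeg h1 h2). Qed.

Lemma target_reaches_self k b : target_reaches (tgt (k, b)) k = false.
Proof.
case Ekb: (tgt (k, b)) => [j|] //=; apply/negbTE/acyclic.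
by apply/aerial_edgeP; exists b.
Qed.

Lemma target_reaches_disjoint k x :
  ~~ (target_reaches (tgt (k, false)) x && target_reaches (tgt (k, true)) x).
Proof.
case E1: (tgt (k, false)) => [j1|] //=.
case E2: (tgt (k, true)) => [j2|] /=; last by rewrite andbF.
have kj1 : E k j1 by apply/aerial_edgeP; exists false.
have kj2 : E k j2 by apply/aerial_edgeP; exists true.
apply: (siblings_disjoint (@aerial_pred_uniq) acyclic x kj1 kj2).
by apply/eqP => j12; move: E2; rewrite -j12 => /(indeg E1).
Qed.

Definition vertex_tree (t : 'I_n -> btree n) (v : kvertex n) : btree n :=
  match v with inl j => t j | inr b => BLeaf n b end.

(* [f] is fuel: [unfold_tree f k] is the full subtree below [k] as soon as
   [f] exceeds [reach_card E k]. *)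
Fixpoint unfold_tree (f : nat) (k : 'I_n) : btree n :=
  if f is f'.+1 then
    BNode k (vertex_tree (unfold_tree f') (tgt (k, false)))
            (vertex_tree (unfold_tree f') (tgt (k, true)))
  else BLeaf n false.

Lemma reach_card_target f k b j :
  reach_card E k < f.+1 -> tgt (k, b) = inl j -> reach_card E j < f.
Proof.
move=> kf Ekb; have kj : E k j by apply/aerial_edgeP; exists b.
by have := reach_card_lt acyclic kj; lia.
Qed.

Lemma unfold_tree_fits f k : reach_card E k < f -> btree_fits G (unfold_tree f k).
Proof.
elim: f k => // f IHf k kf /=.
have fits_child b : (tgt (k, b) == btree_root (vertex_tree (unfold_tree f) (tgt (k, b))))
    && btree_fits G (vertex_tree (unfold_tree f) (tgt (k, b))).
  case Ekb: (tgt (k, b)) => [j|b'] /=; last by rewrite eqxx.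
  have jf := reach_card_target kf Ekb.
  by case: f {IHf kf} jf (IHf j) => // f jf /(_ jf) ->; rewrite /= eqxx.
by case/andP: (fits_child false) => -> ->; case/andP: (fits_child true) => -> ->.
Qed.

Lemma count_unfold_tree f k x : reach_card E k < f ->
  count_mem x (btree_nodes (unfold_tree f k)) = connect E k x.
Proof.
elim: f k => // f IHf k kf /=; rewrite count_cat.
have count_child b : count_mem x (btree_nodes (vertex_tree (unfold_tree f) (tgt (k, b))))
    = target_reaches (tgt (k, b)) x.
  by case Ekb: (tgt (k, b)) => [j|] //=; apply/IHf/(reach_card_target kf Ekb).
rewrite !count_child connect_targets.
have [<-|_] := eqVneq k x; first by rewrite !target_reaches_self.
by case/nandP: (target_reaches_disjoint k x) => /negbTE->; case: (target_reaches _ x).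
Qed.

Lemma acyclic_sym_admissible : sym_admissible G.
Proof.
right; pose F := [seq unfold_tree n.+1 r | r <- enum 'I_n & is_source E r].
have fuel k : reach_card E k < n.+1.
  by rewrite ltnS (leq_trans (max_card _)) ?card_ord.
exists F; split; first by rewrite all_map; apply/allP.
- have count_nodes x : count_mem x (flatten [seq btree_nodes t | t <- F]) = 1.
    rewrite count_flatten -!map_comp (eq_map (g := fun r => nat_of_bool (connect E r x))) => [|r]; last first.
      exact: count_unfold_tree.
    rewrite sumn_count.
    have [r0 r0_src r0x] := exists_source acyclic x.
    rewrite count_filter (@eq_count _ _ (pred1 r0)) ?count_uniq_mem ?enum_uniq ?mem_enum //.
    move=> r /=; apply/andP/eqP => [[rx r_src]|->]; last by [].
    exact: (source_uniq (@aerial_pred_uniq) r_src r0_src rx).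
  apply/allP => x _ /=.
  by rewrite count_nodes count_uniq_mem ?enum_uniq ?mem_enum.
- by rewrite all_map; apply/allP => r _; apply: unfold_tree_fits.
Qed.

End KontsevichGraphs.

Local Open Scope ring_scope.

Lemma mderiv2_linear (R : nzRingType) (d : nat) (a : 'I_d -> R) (i j : 'I_d) :
  mderiv j (mderiv i (\sum_(k < d) a k *: 'X_k)) = 0 :> {mpoly R[d]}.
Proof.
rewrite [mderiv i _]raddf_sum [mderiv j _]raddf_sum big1 // => k _ /=.
rewrite !mderivZ mderivX mderivZ mderivX mnmBE !mnm1E.
by have [->|_] := eqVneq k i; rewrite ?subnn !scale0r ?scaler0.
Qed.

Section Derivs.
Variables (R : realType) (d : nat).
Implicit Types (s : seq 'I_d) (p : {mpoly R[d]}).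

Lemma derivs_mderiv s i p : derivs s (mderiv i p) = mderiv i (derivs s p).
Proof. by elim: s => //= k s ->; rewrite mderiv_comm. Qed.

Lemma derivs0 s : derivs s (0 : {mpoly R[d]}) = 0.
Proof. by elim: s => //= k s ->; rewrite mderiv0. Qed.

Lemma derivs_alpha_bar (c : 'I_d -> 'I_d -> 'I_d -> R) i j s :
  (1 < size s)%N -> derivs s (alpha_bar c i j) = 0.
Proof.
case: s => [|a [|b s]] //= _.
by rewrite -!derivs_mderiv /alpha_bar !mderivZ mderiv2_linear scaler0 derivs0.
Qed.

End Derivs.

Lemma B_op_neq0_indeg_le1 (R : realType) (d n : nat)
    (c : 'I_d -> 'I_d -> 'I_d -> R) (G : kgraph n) (f g : {mpoly R[d]}) :
  B_op c G f g != 0 -> aerial_indeg_le1 G.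
Proof.
move=> B_neq0 e1 e2 j e1j e2j; apply/eqP; apply: contraNT B_neq0 => e1_neq_e2.
have two_into_j : (1 < size (edges_into G (inl j)))%N.
  apply: (@uniq_leq_size _ [:: e1; e2]); first by rewrite /= inE e1_neq_e2.
  by move=> e; rewrite !inE => /orP[]/eqP->; rewrite mem_filter mem_enum ?e1j ?e2j eqxx.
rewrite /B_op big1 // => I _.
by rewrite (bigD1 j) //= derivs_alpha_bar ?mul0r ?size_map.
Qed.

Theorem proposition5p1p2 (R : realType) (d : nat)
    (c : 'I_d -> 'I_d -> 'I_d -> R) (n : nat) (G : kgraph n) :
  is_lie_structure c ->
  (exists f g : {mpoly R[d]}, B_op c G f g != 0) ->
  loop_graph G \/ sym_admissible G.
Proof.
move=> _ [f [g /B_op_neq0_indeg_le1 indeg]].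
pose has_cycle := [exists k, exists j, aerial_edge G k j && connect (aerial_edge G) j k].
have [/existsP[k /existsP[j kjk]]|no_cycle] := boolP has_cycle.
  by left; exists k, j.
right; apply: acyclic_sym_admissible => // k j kj; apply/negP => jk.
by move/negP: no_cycle; apply; apply/existsP; exists k; apply/existsP; exists j; rewrite kj.
Qed.
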